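(* Let $X=\{x_1,\dots,x_n\}$, $S=K[X]$, and let $x\in X$. Let $I_1\subset S$ be a monomial ideal with linear quotients and let $I_2\subset S$ be a monomial ideal with linear quotients whose minimal generators lie in $K[X\setminus\{x\}]$, such that $I_2\subseteq I_1$. Let $I=xI_1+I_2$ and suppose $\mathcal{G}(xI_1)\subseteq\mathcal{G}(I)$. Then $I$ has linear quotients.
   Context: For a monomial ideal $I$, $\mathcal{G}(I)$ is its minimal monomial generating set. A monomial ideal $I$ has linear quotients if $\mathcal{G}(I)$ can be ordered $u_1,\dots,u_s$ such that for each $i=2,\dots,s$ the colon ideal $(u_1,\dots,u_{i-1}):(u_i)$ is generated by variables. *)

From mathcomp Require Import all_boot.
Set Implicit Arguments. Unset Strict Implicit. Unset Printing Implicit Defensive.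

Section MonomialIdeals.
Variable n : nat.

Definition mon := {ffun 'I_n -> nat}.

Definition mone : mon := [ffun=> 0].
Definition mmul (u v : mon) : mon := [ffun i => u i + v i].
Definition mvar (i : 'I_n) : mon := [ffun j => nat_of_bool (j == i)].
Definition mdvd (u v : mon) : bool := [forall i, u i <= v i].

(* a set of monomials; a monomial ideal is identified with the set of
   monomials it contains (it is the K-span of them) *)
Definition mset := mon -> Prop.

Definition is_monideal (I : mset) : Prop :=
  forall u v, I u -> mdvd u v -> I v.

Definition msubset (I J : mset) : Prop := forall w, I w -> J w.

Definition gen_by (s : seq mon) : mset :=
  fun w => exists2 u, u \in s & mdvd u w.

(* ideal sum I + J *)
Definition msum (I J : mset) : mset := fun w => I w \/ J w.

Definition mscale (u : mon) (I : mset) : mset :=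
  fun w => exists2 v, I v & w = mmul u v.

Definition colon (I : mset) (u : mon) : mset := fun w => I (mmul w u).

Definition mingens (I : mset) : mset :=
  fun u => I u /\ (forall v, I v -> mdvd v u -> v = u).

Definition generated_by_vars (I : mset) : Prop :=
  exists A : {set 'I_n}, forall w, I w <-> exists2 i, i \in A & 0 < w i.

Definition linear_quotients (I : mset) : Prop :=
  exists s : seq mon,
    [/\ uniq s,
        (forall u, u \in s <-> mingens I u) &
        (forall i, 0 < i < size s ->
           generated_by_vars (colon (gen_by (take i s)) (nth mone s i)))].

End MonomialIdeals.

(* Order G(I) as x u_1, ..., x u_r, v_1, ..., v_s, where u_1, ..., u_r is a
   linear quotient order of G(I_1) and v_1, ..., v_s one of G(I_2).  Colons
   among the x u_i are those of I_1, since multiplication by x cancels.  For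
   v_j, the colon splits as (x u_1, ..., x u_r) : v_j plus (v_1, ..., v_{j-1}) : v_j.
   The second summand is generated by variables by hypothesis, and the first
   one is exactly (x): x does not divide v_j, yet v_j lies in I_2 ⊆ I_1, so
   some u_i divides v_j. *)
From mathcomp Require Import all_boot.
From mathcomp Require Import zify.
From Stdlib Require Import Classical.

Set Implicit Arguments.
Unset Strict Implicit.
Unset Printing Implicit Defensive.

Section Monomials.
Variable n : nat.
Implicit Types (u v w t : mon n) (I J : mset n) (s : seq (mon n)).

Lemma mmulE u v i : mmul u v i = u i + v i.
Proof. by rewrite ffunE. Qed.

Lemma mvarE (k i : 'I_n) : mvar k i = (i == k).
Proof. by rewrite ffunE. Qed.

Lemma mmulCA u v w : mmul u (mmul v w) = mmul v (mmul u w).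
Proof. by apply/ffunP => i; rewrite !mmulE addnCA. Qed.

Lemma mmul_inj u : injective (mmul u).
Proof.
by move=> v w /ffunP vw; apply/ffunP => i; move: (vw i); rewrite !mmulE => /addnI.
Qed.

Lemma mmul_var_gt0 (k : 'I_n) u : 0 < mmul (mvar k) u k.
Proof. by rewrite mmulE mvarE eqxx. Qed.

Lemma mdvdP u v : reflect (forall i, u i <= v i) (mdvd u v).
Proof. exact: forallP. Qed.

Lemma mdvd_refl u : mdvd u u.
Proof. by apply/mdvdP. Qed.

Lemma mdvd_trans u v w : mdvd u v -> mdvd v w -> mdvd u w.
Proof. by move=> /mdvdP uv /mdvdP vw; apply/mdvdP => i; apply: leq_trans (uv i) (vw i). Qed.

Lemma mdvd_mul2l u v w : mdvd (mmul u v) (mmul u w) = mdvd v w.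
Proof. by apply/mdvdP/mdvdP => dvd i; move: (dvd i); rewrite !mmulE ?leq_add2l. Qed.

Definition mdeg u : nat := \sum_i u i.

Lemma mdeg_lt u v : mdvd u v -> u <> v -> mdeg u < mdeg v.
Proof.
move=> /mdvdP uv neq_uv; case: (pickP (fun i => u i < v i)) => [i lt_i | eq_uv].
  rewrite /mdeg (bigD1 i) //= [X in _ < X](bigD1 i) //= -addSn.
  by apply: leq_add => //; apply: leq_sum.
by case: neq_uv; apply/ffunP => i; move: (eq_uv i) (uv i) => /= /negbT; lia.
Qed.

(* Minimality in a Prop-valued set is undecidable, hence the classical split. *)
Lemma mingens_below I w : I w -> exists2 t, mingens I t & mdvd t w.
Proof.
move: {2}(mdeg w) (erefl (mdeg w)) => N; elim/ltn_ind: N w => N IH w degw Iw.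
case: (classic (exists v, [/\ I v, mdvd v w & v <> w])) => [[v [Iv vw neq_vw]] | no_smaller].
  have lt_deg : mdeg v < N by rewrite -degw; apply: mdeg_lt.
  have [t mint tv] := IH _ lt_deg v erefl Iv.
  by exists t; last exact: mdvd_trans tv vw.
exists w; last exact: mdvd_refl.
by split=> // v Iv vw; apply: NNPP => neq_vw; apply: no_smaller; exists v.
Qed.

Lemma gen_by_mingens I s w :
  (forall u, u \in s <-> mingens I u) -> I w -> gen_by s w.
Proof. by move=> sI /mingens_below [t /sI]; exists t. Qed.

Lemma mingens_mscale u I v : mingens (mscale u I) (mmul u v) <-> mingens I v.
Proof.
split.
  move=> [[v' Iv' /mmul_inj eq_vv'] min_uv]; subst v'; split=> // w Iw wv.
  by apply: (@mmul_inj u); apply: min_uv; [exists w | rewrite mdvd_mul2l].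
move=> [Iv min_v]; split; first by exists v.
by move=> _ [w Iw ->]; rewrite mdvd_mul2l => /(min_v _ Iw) ->.
Qed.

Lemma mingens_msum I J u : mingens (msum I J) u -> mingens I u \/ mingens J u.
Proof.
by move=> [[Iu|Ju] min_u]; [left | right]; split=> // v Hv; apply: min_u; [left | right].
Qed.

Lemma mingens_msumr I J u :
  mingens J u -> (forall v, I v -> ~~ mdvd v u) -> mingens (msum I J) u.
Proof.
move=> [Ju min_u] ndvd; split; first by right.
by move=> v [/ndvd/negP // | /min_u].
Qed.

Lemma gen_by_cat s1 s2 w : gen_by (s1 ++ s2) w <-> msum (gen_by s1) (gen_by s2) w.
Proof.
split; first by move=> [t]; rewrite mem_cat => /orP [] ? ?; [left | right]; exists t.
by move=> [] [t st tw]; exists t; rewrite // mem_cat st ?orbT.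
Qed.

Lemma colon_gen_by_map_mmul u s v w :
  colon (gen_by (map (mmul u) s)) (mmul u v) w <-> colon (gen_by s) v w.
Proof.
rewrite /colon mmulCA; split; first by move=> [_ /mapP [t st ->]]; rewrite mdvd_mul2l; exists t.
by move=> [t st tw]; exists (mmul u t); rewrite ?map_f ?mdvd_mul2l.
Qed.

Lemma colon_gen_by_map_mvar (k : 'I_n) s v w :
  v k = 0 -> gen_by s v -> colon (gen_by (map (mmul (mvar k)) s)) v w <-> 0 < w k.
Proof.
move=> vk0 [t st tv]; split.
  move=> [_ /mapP [t' _ ->] /mdvdP /(_ k)].
  by rewrite !mmulE vk0 mvarE eqxx; lia.
move=> wk; exists (mmul (mvar k) t); first exact: map_f.
apply/mdvdP => i; move/mdvdP: tv => /(_ i).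
by rewrite !mmulE mvarE; case: eqP => [->|_]; lia.
Qed.

Lemma generated_by_vars_ext I J :
  generated_by_vars I -> (forall w, I w <-> J w) -> generated_by_vars J.
Proof. by move=> [A IA] IJ; exists A => w; rewrite -IJ. Qed.

Lemma generated_by_var (k : 'I_n) : generated_by_vars (fun w => 0 < w k).
Proof.
exists [set k] => w; split; first by exists k; rewrite ?set11.
by move=> [i /set1P ->].
Qed.

Lemma generated_by_vars_msum I J :
  generated_by_vars I -> generated_by_vars J -> generated_by_vars (msum I J).
Proof.
move=> [A IA] [B JB]; exists (A :|: B) => w; rewrite /msum IA JB.
split; first by move=> [] [i ? ?]; exists i; rewrite // inE; apply/orP; [left | right].
by move=> [i /setUP [] ? ?]; [left | right]; exists i.
Qed.

Definition linear_quotient_order s : Prop :=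
  forall i, 0 < i < size s ->
    generated_by_vars (colon (gen_by (take i s)) (nth (mone n) s i)).

Lemma linear_quotient_order_map_mmul u s :
  linear_quotient_order s -> linear_quotient_order (map (mmul u) s).
Proof.
move=> lqs i; rewrite size_map => lt_i.
rewrite -map_take (nth_map (mone n)) ?(proj2 (andP lt_i)) //.
by apply: generated_by_vars_ext (lqs i lt_i) _ => w; rewrite colon_gen_by_map_mmul.
Qed.

Lemma linear_quotient_order_cat s1 s2 :
  linear_quotient_order s1 -> linear_quotient_order s2 ->
  (forall v, v \in s2 -> generated_by_vars (colon (gen_by s1) v)) ->
  linear_quotient_order (s1 ++ s2).
Proof.
move=> lq1 lq2 lq12 i /andP [i_gt0]; rewrite size_cat take_cat nth_cat.
case: (ltnP i (size s1)) => [lt_i _ | le_i lt_i]; first by apply: lq1; rewrite i_gt0.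
set m := i - size s1; have lt_m : m < size s2 by rewrite /m; lia.
have s2m := lq12 _ (mem_nth (mone n) lt_m).
case: (posnP m) => [m0 | m_gt0]; first by move: s2m; rewrite m0 take0 cats0.
have /lq2 s2take : 0 < m < size s2 by rewrite m_gt0.
apply: generated_by_vars_ext (generated_by_vars_msum s2m s2take) _.
by move=> w; rewrite /colon gen_by_cat.
Qed.

End Monomials.

Section ScaledSum.
Variables (n : nat) (k : 'I_n) (I1 I2 : mset n).
Hypothesis mingens2_k0 : forall u, mingens I2 u -> u k = 0.
Hypothesis mingens_scale1 :
  msubset (mingens (mscale (mvar k) I1)) (mingens (msum (mscale (mvar k) I1) I2)).
Implicit Types (u v : mon n) (s : seq (mon n)).

Lemma uniq_mingens_scaled_sum s1 s2 :
  uniq s1 -> uniq s2 -> (forall u, u \in s2 <-> mingens I2 u) ->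
  uniq (map (mmul (mvar k)) s1 ++ s2).
Proof.
move=> U1 U2 s2I; rewrite cat_uniq (map_inj_uniq (@mmul_inj _ _)) U1 U2 andbT /=.
apply/hasPn => u /s2I /mingens2_k0 uk0; apply/mapP => [[v _ uv]].
by move: (mmul_var_gt0 k v); rewrite -uv uk0.
Qed.

Lemma mem_mingens_scaled_sum s1 s2 :
  (forall u, u \in s1 <-> mingens I1 u) -> (forall u, u \in s2 <-> mingens I2 u) ->
  forall u, u \in map (mmul (mvar k)) s1 ++ s2 <->
            mingens (msum (mscale (mvar k) I1) I2) u.
Proof.
move=> s1I s2I u; rewrite mem_cat; split.
  case/orP => [/mapP [v /s1I/mingens_mscale min_v ->] | /s2I min_u]; first exact: mingens_scale1.
  apply: mingens_msumr => // _ [v _ ->]; apply/negP => /mdvdP /(_ k).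
  by rewrite (mingens2_k0 min_u) leqNgt mmul_var_gt0.
case/mingens_msum => [min_u | /s2I -> //]; last by rewrite orbT.
by case: (min_u) => [[v _ uv]] _; rewrite uv map_f // s1I -(mingens_mscale (mvar k)) -uv.
Qed.

End ScaledSum.

Theorem lemma3p2 (n : nat) (k : 'I_n) (I1 I2 : mset n) :
  is_monideal I1 -> linear_quotients I1 ->
  is_monideal I2 -> linear_quotients I2 ->
  (forall u, mingens I2 u -> u k = 0) ->
  msubset I2 I1 ->
  msubset (mingens (mscale (mvar k) I1))
          (mingens (msum (mscale (mvar k) I1) I2)) ->
  linear_quotients (msum (mscale (mvar k) I1) I2).
Proof.
(* Only minimal generators enter the argument. *)
move=> _ [s1 [U1 s1I lq1]] _ [s2 [U2 s2I lq2]] k0 sub21 min1.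
exists (map (mmul (mvar k)) s1 ++ s2); split.
- exact: (uniq_mingens_scaled_sum k0 U1 U2 s2I).
- exact: (mem_mingens_scaled_sum k0 min1 s1I s2I).
- apply: linear_quotient_order_cat; [exact: linear_quotient_order_map_mmul | exact: lq2 |].
  move=> v /s2I min_v.
  have vk0 := k0 _ min_v.
  have s1v := gen_by_mingens s1I (sub21 _ (proj1 min_v)).
  by apply: generated_by_vars_ext (generated_by_var k) _ => w; rewrite colon_gen_by_map_mvar.
Qed.
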